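(* Let $n$ be a nonnegative integer and let $a,b,c\in\mathbb{C}$ be such that all hypergeometric series and quotients below are defined (no lower parameter is zero or a negative integer). Then \[ {}_4F_3\!\left(\left.{-n,\frac{a}{2},\frac{a+1}{2},b \atop a,1+a-c,c}\right| 4\right) =\frac{(c-b)_n}{(c)_n}\, {}_4F_3\!\left(\left.{-n,1-c-n,b,1+b-c \atop 1+a-c,\frac{1+b-c-n}{2},\frac{2+b-c-n}{2}}\right| \frac{1}{4}\right). \]
   Context: For $a\in\mathbb{C}$, $(a)_0=1$ and $(a)_k=a(a+1)\cdots(a+k-1)$ for $k\ge1$. The hypergeometric series is ${}_rF_s\!\left(\left.{\alpha_1,\ldots,\alpha_r\atop \beta_1,\ldots,\beta_s}\right|z\right)=\sum_{k\ge0}\frac{(\alpha_1)_k\cdots(\alpha_r)_k}{k!(\beta_1)_k\cdots(\beta_s)_k}z^k$, with no lower parameter zero or a negative integer; when an upper parameter is $-n$ ($n$ a nonnegative integer) it is a finite sum over $0\le k\le n$. *)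

From mathcomp Require Import all_boot all_algebra.
From mathcomp Require Export complex reals.
Set Implicit Arguments. Unset Strict Implicit. Unset Printing Implicit Defensive.
Import GRing.Theory Num.Theory.
Local Open Scope ring_scope.

Definition poch {F : fieldType} (a : F) (k : nat) : F :=
  \prod_(i < k) (a + i%:R).

(* Terminating hypergeometric series rF_s whose first upper parameter is -n:
   upper parameters (-n) :: us, lower parameters ls, argument z.
   Since (-n)_k = 0 for k > n, the series is the finite sum over 0 <= k <= n. *)
Definition hypF_term {F : fieldType} (n : nat) (us ls : seq F) (z : F) : F :=
  \sum_(k < n.+1)
    (poch (- n%:R) k * \prod_(u <- us) poch u k)
    / (k`!%:R * \prod_(l <- ls) poch l k) * z ^+ k.

Definition not_nonpos_int {F : fieldType} (x : F) : Prop :=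
  forall m : nat, x <> - m%:R.

From mathcomp Require Import all_boot all_algebra ring.
From mathcomp Require Import complex reals.
Set Implicit Arguments. Unset Strict Implicit. Unset Printing Implicit Defensive.
Import GRing.Theory Num.Theory.
Local Open Scope ring_scope.

(* By the duplication formula (a/2)_k ((a+1)/2)_k 4^k = (a)_(2k), the k-th term
   on the left has the factor (a)_(2k)/(a)_k = (a+k)_k.  Writing
   a + k = c + (1+a-c) - 1 + k and expanding (a+k)_k by Vandermonde's identity
   for rising factorials turns the left side into a double sum over i + m = k.
   For fixed i the sum over m is a terminating 2F1 at 1, which Chu-Vandermonde
   evaluates to (c-b-i)_(n-i)/(c)_(n-i); reflection and duplication, now applied
   to (1+b-c-n)_(2i), rewrite this as the i-th term on the right. *)

Lemma sum_triangle (V : nmodType) (G : nat -> nat -> V) n :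
  \sum_(k < n.+1) \sum_(i < k.+1) G k i
  = \sum_(i < n.+1) \sum_(m < (n - i).+1) G (i + m)%N i.
Proof.
elim: n => [|n IH]; first by rewrite !big_ord1.
rewrite big_ord_recr /= IH [RHS]big_ord_recr /= subnn big_ord1 addn0.
rewrite [\sum_(i < n.+2) G n.+1 i]big_ord_recr /= addrA; congr (_ + _).
rewrite -big_split; apply: eq_bigr => i _ /=.
have lei : (i <= n)%N by rewrite -ltnS ltn_ord.
by rewrite subSn // [RHS]big_ord_recr /= addnS subnKC.
Qed.

Section Pochhammer.
Variable F : fieldType.
Implicit Types x y : F.

Lemma poch0 x : poch x 0 = 1.
Proof. by rewrite /poch big_ord0. Qed.

Lemma pochS x k : poch x k.+1 = poch x k * (x + k%:R).
Proof. by rewrite /poch big_ord_recr. Qed.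

Lemma pochD x m k : poch x (m + k) = poch x m * poch (x + m%:R) k.
Proof.
elim: k => [|k IH]; first by rewrite addn0 poch0 mulr1.
by rewrite addnS !pochS IH natrD -mulrA addrA.
Qed.

Lemma poch_reflect x k : poch x k = (-1) ^+ k * poch (1 - x - k%:R) k.
Proof.
rewrite /poch [in RHS](reindex_inj rev_ord_inj) /=.
have -> : \prod_(j < k) (1 - x - k%:R + (rev_ord j)%:R) = \prod_(j < k) - (x + j%:R).
  apply: eq_bigr => j _; rewrite /= natrB ?ltn_ord // -addn1 natrD; ring.
by rewrite prodrN card_ord mulrA -exprMn mulrNN mulr1 expr1n mul1r.
Qed.

Lemma poch_neq0 x k : not_nonpos_int x -> poch x k != 0.
Proof. by move=> x_adm; apply/prodf_neq0 => i _; rewrite addr_eq0; apply/eqP. Qed.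

Lemma poch_oppn N m : poch (- N%:R) m = (-1) ^+ m * 'C(N, m)%:R * m`!%:R :> F.
Proof.
elim: m => [|m IH]; first by rewrite poch0 bin0 fact0 expr0 !mul1r.
have binS_fact : 'C(N, m.+1)%:R * (m.+1)`!%:R = (N%:R - m%:R) * 'C(N, m)%:R * m`!%:R :> F.
  rewrite factS natrM mulrA -natrM mulnC mul_bin_left natrM.
  by case: (leqP m N) => [/natrB -> | /bin_small ->]; rewrite ?mulr0.
by rewrite pochS IH -[RHS]mulrA binS_fact exprS; ring.
Qed.

Lemma poch_binomial x y k :
  poch (x + y) k = \sum_(i < k.+1) 'C(k, i)%:R * poch x i * poch y (k - i).
Proof.
elim: k => [|k IH]; first by rewrite big_ord1 bin0 !poch0 !mulr1.
set B := \sum_(i < k.+2) 'C(k, i)%:R * poch x i * poch y (k.+1 - i).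
have HB : B = \sum_(i < k.+1) 'C(k, i)%:R * poch x i * (poch y (k - i) * (y + (k - i)%:R)).
  rewrite /B big_ord_recr /= bin_small // !mul0r addr0.
  by apply: eq_bigr => i _; rewrite subSn ?pochS // -ltnS.
rewrite big_ord_recl /=.
under eq_bigr do rewrite /bump leq0n add1n binS natrD !mulrDl subSS.
rewrite big_split /= addrA.
have -> : 'C(k.+1, 0)%:R * poch x 0 * poch y (k.+1 - 0)
   + \sum_(i < k.+1) 'C(k, i.+1)%:R * poch x i.+1 * poch y (k - i) = B.
  by rewrite /B [RHS]big_ord_recl /= !bin0.
rewrite HB pochS IH mulr_suml -big_split /=.
apply: eq_bigr => i _; rewrite pochS natrB; last by rewrite -ltnS ltn_ord.
ring.
Qed.

Lemma poch_binomial_rev x y k :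
  poch (x + y - 1 + k%:R) k
  = \sum_(i < k.+1) 'C(k, i)%:R * poch (x + (k - i)%:R) i * poch (y + i%:R) (k - i).
Proof.
rewrite poch_reflect.
have -> : 1 - (x + y - 1 + k%:R) - k%:R = (1 - x - k%:R) + (1 - y - k%:R) by ring.
rewrite poch_binomial mulr_sumr; apply: eq_bigr => -[i /= le_ik] _.
rewrite (poch_reflect (1 - x - k%:R)) (poch_reflect (1 - y - k%:R)).
have -> : 1 - (1 - x - k%:R) - i%:R = x + (k - i)%:R by rewrite natrB //; ring.
have -> : 1 - (1 - y - k%:R) - (k - i)%:R = y + i%:R by rewrite natrB //; ring.
have -> : (-1) ^+ k = (-1) ^+ i * (-1) ^+ (k - i) :> F by rewrite -exprD subnKC.
set s := (-1) ^+ i; set t := (-1) ^+ (k - i).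
transitivity ((s * s) * (t * t) * ('C(k, i)%:R * poch (x + (k - i)%:R) i * poch (y + i%:R) (k - i))).
  by ring.
by rewrite -!expr2 !sqrr_sign !mul1r.
Qed.
Lemma poch_tail_reflect x n i : (i <= n)%N ->
  poch (x - i%:R) (n - i) * poch (1 - x - n%:R) (i + i) = poch x n * poch (x - i%:R) i.
Proof.
move=> le_in.
have -> : poch (1 - x - n%:R) (i + i) = poch (x - i%:R + (n - i)%:R) (i + i).
  rewrite poch_reflect -signr_odd addnn odd_double expr0 mul1r.
  by congr (poch _ _); rewrite natrB // -muln2 natrM; ring.
rewrite -pochD -{2}[x](subrK i%:R) mulrC -pochD.
by rewrite addnA subnK // addnC.
Qed.

End Pochhammer.

Section CharacteristicZero.
Variable F : numFieldType.
Implicit Types x y : F.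

Lemma natr_fact_neq0 m : (m`!%:R : F) != 0.
Proof. by rewrite pnatr_eq0 -lt0n fact_gt0. Qed.

Lemma poch_duplication x k :
  poch (x / 2%:R) k * poch ((x + 1) / 2%:R) k * 4%:R ^+ k = poch x (k + k).
Proof.
elim: k => [|k IH]; first by rewrite !poch0 expr0 !mulr1.
rewrite addnS addSn !pochS exprS -IH !natrD.
have two_neq0 : (2%:R : F) != 0 by rewrite pnatr_eq0.
by field.
Qed.

Lemma chu_vandermonde N x y : poch y N != 0 ->
  \sum_(m < N.+1) poch (- N%:R) m * poch x m / (m`!%:R * poch y m)
  = poch (y - x) N / poch y N.
Proof.
move=> yN_neq0; apply: (canRL (mulfK yN_neq0)).
rewrite mulr_suml (poch_reflect (y - x)).
have -> : 1 - (y - x) - N%:R = x + (1 - y - N%:R) by ring.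
rewrite poch_binomial mulr_sumr; apply: eq_bigr => -[m /=]; rewrite ltnS => le_mN _.
have -> : poch y N = poch y m * poch (y + m%:R) (N - m) by rewrite -pochD subnKC.
have ym_neq0 : poch y m != 0.
  by move: yN_neq0; rewrite -(subnKC le_mN) pochD mulf_eq0 negb_or => /andP[].
rewrite (poch_reflect (y + m%:R)) poch_oppn.
have -> : 1 - (y + m%:R) - (N - m)%:R = 1 - y - N%:R by rewrite natrB //; ring.
have -> : (-1) ^+ N = (-1) ^+ m * (-1) ^+ (N - m) :> F by rewrite -exprD subnKC.
by field; rewrite ym_neq0 natr_fact_neq0.
Qed.

Lemma lhs_term_expand n (a b c : F) k :
  poch a k != 0 -> poch (1 + a - c) k != 0 -> poch c k != 0 ->
  poch (- n%:R) k * (poch (a / 2%:R) k * (poch ((a + 1) / 2%:R) k * poch b k))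
    / (k`!%:R * (poch a k * (poch (1 + a - c) k * poch c k))) * 4%:R ^+ k
  = \sum_(i < k.+1) poch (- n%:R) k * poch b k
      / (i`!%:R * (k - i)`!%:R * poch c (k - i) * poch (1 + a - c) i).
Proof.
move=> ak_neq0 dk_neq0 ck_neq0.
transitivity (poch (- n%:R) k * poch b k / (k`!%:R * poch (1 + a - c) k * poch c k)
               * poch (c + (1 + a - c) - 1 + k%:R) k).
  have -> : c + (1 + a - c) - 1 + k%:R = a + k%:R by ring.
  rewrite -[in RHS](mulKf ak_neq0 (poch (a + k%:R) k)) -pochD -poch_duplication.
  by field; rewrite natr_fact_neq0 ak_neq0 dk_neq0 ck_neq0.
rewrite poch_binomial_rev mulr_sumr; apply: eq_bigr => -[i /=]; rewrite ltnS => le_ik _.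
have split_c : poch c k = poch c (k - i) * poch (c + (k - i)%:R) i by rewrite -pochD subnK.
have split_d : poch (1 + a - c) k = poch (1 + a - c) i * poch (1 + a - c + i%:R) (k - i).
  by rewrite -pochD subnKC.
have split_fact : (k`!%:R : F) = 'C(k, i)%:R * i`!%:R * (k - i)`!%:R.
  by rewrite -(bin_fact le_ik) !natrM mulrA.
move: ck_neq0 dk_neq0; rewrite split_c split_d split_fact !mulf_eq0 !negb_or.
move=> /andP[c1_neq0 c2_neq0] /andP[d1_neq0 d2_neq0].
have bin_neq0 : ('C(k, i)%:R : F) != 0 by rewrite pnatr_eq0 -lt0n bin_gt0.
by field; rewrite bin_neq0 !natr_fact_neq0 c1_neq0 c2_neq0 d1_neq0 d2_neq0.
Qed.

Lemma lhs_inner_sum n i (b c d : F) : (i <= n)%N -> poch c (n - i) != 0 -> poch d i != 0 ->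
  \sum_(m < (n - i).+1) poch (- n%:R) (i + m) * poch b (i + m)
      / (i`!%:R * m`!%:R * poch c m * poch d i)
  = poch (- n%:R) i * poch b i / (i`!%:R * poch d i)
    * (poch (c - b - i%:R) (n - i) / poch c (n - i)).
Proof.
move=> le_in c_neq0 d_neq0.
have -> : c - b - i%:R = c - (b + i%:R) by rewrite opprD addrA.
rewrite -chu_vandermonde // mulr_sumr; apply: eq_bigr => -[m /=]; rewrite ltnS => le_m _.
have cm_neq0 : poch c m != 0.
  by move: c_neq0; rewrite -(subnKC le_m) pochD mulf_eq0 negb_or => /andP[].
rewrite !pochD.
have -> : - n%:R + i%:R = - (n - i)%:R :> F by rewrite natrB //; ring.
by field; rewrite !natr_fact_neq0 cm_neq0 d_neq0.
Qed.

Lemma rhs_term n i (b c d : F) : (i <= n)%N ->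
  not_nonpos_int c -> poch d i != 0 ->
  not_nonpos_int ((1 + b - c - n%:R) / 2%:R) ->
  not_nonpos_int ((2%:R + b - c - n%:R) / 2%:R) ->
  poch (- n%:R) i * poch b i / (i`!%:R * poch d i)
    * (poch (c - b - i%:R) (n - i) / poch c (n - i))
  = poch (c - b) n / poch c n *
    (poch (- n%:R) i * (poch (1 - c - n%:R) i * (poch b i * poch (1 + b - c) i))
     / (i`!%:R * (poch d i * (poch ((1 + b - c - n%:R) / 2%:R) i
                              * poch ((2%:R + b - c - n%:R) / 2%:R) i)))
     * (4%:R^-1) ^+ i).
Proof.
move=> le_in c_adm d_neq0 e1_adm e2_adm.
have e2_shift : (2%:R + b - c - n%:R) / 2%:R = (1 - (c - b) - n%:R + 1) / 2%:R.
  by congr (_ / _); ring.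
have e1_shift : 1 + b - c - n%:R = 1 - (c - b) - n%:R by ring.
have four_neq0 : (4%:R : F) ^+ i != 0 by rewrite expf_neq0 // pnatr_eq0.
have e_dup : poch ((1 + b - c - n%:R) / 2%:R) i * poch ((2%:R + b - c - n%:R) / 2%:R) i
    = poch (1 - (c - b) - n%:R) (i + i) / 4%:R ^+ i.
  by rewrite e2_shift e1_shift -poch_duplication mulfK.
have e_neq0 : poch (1 - (c - b) - n%:R) (i + i) != 0.
  rewrite -poch_duplication -e2_shift -e1_shift !mulf_neq0 //; exact: poch_neq0.
have signs : poch (1 - c - n%:R) i * poch (1 + b - c) i
    = poch (c + (n - i)%:R) i * poch (c - b - i%:R) i.
  rewrite [poch (1 - c - n%:R) i]poch_reflect [poch (1 + b - c) i]poch_reflect.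
  rewrite mulrACA -expr2 sqrr_sign mul1r natrB //.
  by congr (poch _ _ * poch _ _); ring.
have split_c : poch c n = poch c (n - i) * poch (c + (n - i)%:R) i by rewrite -pochD subnK.
have := poch_neq0 n c_adm; rewrite split_c mulf_eq0 negb_or => /andP[c1_neq0 c2_neq0].
rewrite [poch (1 - c - n%:R) i * _]mulrCA signs e_dup exprVn.
transitivity (poch (- n%:R) i * poch b i / (i`!%:R * poch d i)
    * (poch (c - b) n * poch (c - b - i%:R) i)
    / (poch c (n - i) * poch (1 - (c - b) - n%:R) (i + i))).
  rewrite -poch_tail_reflect //.
  by field; rewrite natr_fact_neq0 d_neq0 c1_neq0 e_neq0.
by field; rewrite natr_fact_neq0 d_neq0 c1_neq0 c2_neq0 e_neq0 four_neq0.
Qed.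

End CharacteristicZero.

Theorem proposition3p2 (R : realType) (n : nat) (a b c : R[i])
  (ha : not_nonpos_int a)
  (hac : not_nonpos_int (1 + a - c))
  (hc : not_nonpos_int c)
  (h1 : not_nonpos_int ((1 + b - c - n%:R) / 2%:R))
  (h2 : not_nonpos_int ((2%:R + b - c - n%:R) / 2%:R)) :
  hypF_term n [:: a / 2%:R; (a + 1) / 2%:R; b] [:: a; 1 + a - c; c] 4%:R
  = poch (c - b) n / poch c n *
    hypF_term n [:: 1 - c - n%:R; b; 1 + b - c]
      [:: 1 + a - c; (1 + b - c - n%:R) / 2%:R; (2%:R + b - c - n%:R) / 2%:R]
      (4%:R)^-1.
Proof.
rewrite /hypF_term.
under eq_bigr do rewrite !big_cons !big_nil !mulr1
  lhs_term_expand ?(poch_neq0 _ ha) ?(poch_neq0 _ hac) ?(poch_neq0 _ hc) //.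
rewrite (sum_triangle (fun k i => poch (- n%:R) k * poch b k
  / (i`!%:R * (k - i)`!%:R * poch c (k - i) * poch (1 + a - c) i))) /=.
rewrite mulr_sumr; apply: eq_bigr => -[i /=]; rewrite ltnS => le_in _.
under eq_bigr do rewrite addKn.
rewrite lhs_inner_sum ?(poch_neq0 _ hac) ?(poch_neq0 _ hc) //.
by rewrite rhs_term ?(poch_neq0 _ hac) // !big_cons !big_nil !mulr1.
Qed.
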